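(* Let $k$ be a field, let $B$ be a unital associative $k$-algebra and let $(J_i)_{i\in I}$ be a covering of $B$, i.e.\ a finite family of two-sided ideals of $B$ with $\bigcap_{i\in I}J_i=\{0\}$. For $i,j\in I$ put $B_i=B/J_i$, $B_{ij}=B/(J_i+J_j)$, with canonical surjections $\pi_i:B\to B_i$, $\pi_{ij}:B\to B_{ij}$, and let $\pi^i_j:B_i\to B_{ij}$, $b+J_i\mapsto b+J_i+J_j$. Let $A=\bigoplus_{i\in I}B_i$ (product algebra) and $\mathcal{C}=\bigoplus_{i,j\in I}B_{ij}$. Then $\mathcal{C}$ is an $A$-bimodule with actions $$(a_i)_{i\in I}\cdot(a_{jk})_{j,k\in I}\cdot(a'_l)_{l\in I}=\big(\pi^j_k(a_j)\,a_{jk}\,\pi^k_j(a'_k)\big)_{j,k\in I}$$ for $a_i,a'_i\in B_i$, $a_{jk}\in B_{jk}$, and $\mathcal{C}$ is an $A$-coring with coproduct $$\Delta_{\mathcal{C}}\big((\pi_{ij}(b_{ij}))_{i,j\in I}\big)=\sum_{k\in I}\big(\pi_{il}(b_{ik})\big)_{i,l\in I}\otimes_A\big(\pi_{mj}(\delta_{kj}1_B)\big)_{m,j\in I}$$ (equivalently $=\sum_{k\in I}\big(\pi_{il}(\delta_{ik}1_B)\big)_{i,l\in I}\otimes_A\big(\pi_{mj}(b_{kj})\big)_{m,j\in I}$) and counit $$\varepsilon_{\mathcal{C}}\big((\pi_{ij}(b_{ij}))_{i,j\in I}\big)=(\pi_i(b_{ii}))_{i\in I},$$ for all $b_{ij}\in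 B$; in particular these maps are well defined.
   Context: Here $\delta_{kj}1_B$ denotes $1_B$ if $k=j$ and $0$ otherwise. For a $k$-algebra $A$, an $A$-coring is an $A$-bimodule $\mathcal{C}$ together with $A$-bimodule maps $\Delta_{\mathcal{C}}:\mathcal{C}\to\mathcal{C}\otimes_A\mathcal{C}$ and $\varepsilon_{\mathcal{C}}:\mathcal{C}\to A$ such that $(\Delta_{\mathcal{C}}\otimes_A\mathrm{id})\circ\Delta_{\mathcal{C}}=(\mathrm{id}\otimes_A\Delta_{\mathcal{C}})\circ\Delta_{\mathcal{C}}$ and $(\varepsilon_{\mathcal{C}}\otimes_A\mathrm{id})\circ\Delta_{\mathcal{C}}=(\mathrm{id}\otimes_A\varepsilon_{\mathcal{C}})\circ\Delta_{\mathcal{C}}=\mathrm{id}_{\mathcal{C}}$ (with the canonical identifications $A\otimes_A\mathcal{C}\cong\mathcal{C}\cong\mathcal{C}\otimes_A A$). *)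

From HB Require Import structures.
From mathcomp Require Import all_boot all_algebra.
Set Implicit Arguments. Unset Strict Implicit. Unset Printing Implicit Defensive.
Import GRing.Theory.
Local Open Scope ring_scope.

Definition two_sided_ideal (B : pzRingType) (J : B -> Prop) : Prop :=
  [/\ J 0, (forall x y, J x -> J y -> J (x - y)),
      (forall a x, J x -> J (a * x)) & (forall a x, J x -> J (x * a))].

Definition ideal_sum (B : pzRingType) (J1 J2 : B -> Prop) : B -> Prop :=
  fun x => exists y z, [/\ J1 y, J2 z & x = y + z].

Definition covering (B : pzRingType) (I : finType) (J : I -> B -> Prop) : Prop :=
  (forall i, two_sided_ideal (J i)) /\ (forall x, (forall i, J i x) -> x = 0).

(* The ring A is presented by a zmodType TA of representatives together    *)
(* with a congruence eqA and a multiplication mulA / unit oneA; the        *)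
(* A-bimodule C by a zmodType TC of representatives with a relation eqC    *)
(* (the quotient TC/eqC is C) and actions la, ra on representatives.       *)
(* Elements of C (x)_A C are given by finite formal sums of pairs of       *)
(* representatives (seq (TC * TC)); two such sums are equal in C (x)_A C   *)
(* iff every A-balanced biadditive map (well defined on C x C) into any    *)
(* abelian group takes the same value on them.  Same for C (x)_A C (x)_A C. *)

Section Coring.
Variables (TA TC : zmodType).
Variables (eqA : TA -> TA -> Prop) (mulA : TA -> TA -> TA) (oneA : TA).
Variables (eqC : TC -> TC -> Prop) (la : TA -> TC -> TC) (ra : TC -> TA -> TC).

Definition balanced2 (G : zmodType) (f : TC -> TC -> G) : Prop :=
  [/\ (forall x x' y y', eqC x x' -> eqC y y' -> f x y = f x' y'),
      (forall x x' y, f (x + x') y = f x y + f x' y),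
      (forall x y y', f x (y + y') = f x y + f x y')
    & (forall x a y, f (ra x a) y = f x (la a y))].

Definition tensor2_eq (s t : seq (TC * TC)) : Prop :=
  forall (G : zmodType) (f : TC -> TC -> G), balanced2 f ->
    \sum_(p <- s) f p.1 p.2 = \sum_(p <- t) f p.1 p.2.

Definition balanced3 (G : zmodType) (f : TC -> TC -> TC -> G) : Prop :=
  [/\ (forall x x' y y' z z', eqC x x' -> eqC y y' -> eqC z z' ->
         f x y z = f x' y' z'),
      (forall x x' y z, f (x + x') y z = f x y z + f x' y z),
      (forall x y y' z, f x (y + y') z = f x y z + f x y' z),
      (forall x y z z', f x y (z + z') = f x y z + f x y z')
    & ((forall x a y z, f (ra x a) y z = f x (la a y) z)
       /\ (forall x y a z, f x (ra y a) z = f x y (la a z)))].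

Definition tensor3_eq (s t : seq (TC * TC * TC)) : Prop :=
  forall (G : zmodType) (f : TC -> TC -> TC -> G), balanced3 f ->
    \sum_(p <- s) f p.1.1 p.1.2 p.2 = \sum_(p <- t) f p.1.1 p.1.2 p.2.

Definition zmod_congruence (T : zmodType) (e : T -> T -> Prop) : Prop :=
  [/\ (forall x, e x x), (forall x y, e x y -> e y x),
      (forall x y z, e x y -> e y z -> e x z),
      (forall x x' y y', e x x' -> e y y' -> e (x + y) (x' + y'))
    & (forall x x', e x x' -> e (- x) (- x'))].

Definition is_bimodule : Prop :=
  [/\ zmod_congruence eqC /\
      ((forall a a' c c', eqA a a' -> eqC c c' -> eqC (la a c) (la a' c'))
       /\ (forall a a' c c', eqA a a' -> eqC c c' -> eqC (ra c a) (ra c' a'))),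
      (forall c, eqC (la oneA c) c /\ eqC (ra c oneA) c),
      (forall a a' c, eqC (la (mulA a a') c) (la a (la a' c))
                   /\ eqC (ra c (mulA a a')) (ra (ra c a) a')
                   /\ eqC (ra (la a c) a') (la a (ra c a'))),
      (forall a c c', eqC (la a (c + c')) (la a c + la a c')
                   /\ eqC (ra (c + c') a) (ra c a + ra c' a))
    & forall a a' c, eqC (la (a + a') c) (la a c + la a' c)
                   /\ eqC (ra c (a + a')) (ra c a + ra c a')].

Definition is_coring (Delta : TC -> seq (TC * TC)) (eps : TC -> TA) : Prop :=
  [/\ is_bimodule,
      [/\ (forall c c', eqC c c' -> tensor2_eq (Delta c) (Delta c')),
          (forall c c', tensor2_eq (Delta (c + c')) (Delta c ++ Delta c'))
        & (forall a c a', tensor2_eq (Delta (ra (la a c) a'))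
                             [seq (la a p.1, ra p.2 a') | p <- Delta c])],
      [/\ (forall c c', eqC c c' -> eqA (eps c) (eps c')),
          (forall c c', eqA (eps (c + c')) (eps c + eps c'))
        & (forall a c a', eqA (eps (ra (la a c) a')) (mulA (mulA a (eps c)) a'))],
      (forall c, tensor3_eq
         [seq (q.1, q.2, p.2) | p <- Delta c, q <- Delta p.1]
         [seq (p.1, q.1, q.2) | p <- Delta c, q <- Delta p.2])
    & (* counit laws, via A (x)_A C = C = C (x)_A A *)
      (forall c, eqC (\sum_(p <- Delta c) la (eps p.1) p.2) c
              /\ eqC (\sum_(p <- Delta c) ra p.1 (eps p.2)) c)].

End Coring.

(* A = (+)_i B/J_i is presented by {ffun I -> B} (a_i representing         *)
(* a_i + J_i), C = (+)_{i,j} B/(J_i+J_j) by {ffun I * I -> B}.            *)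
(* On representatives, pi^j_k is the identity.                            *)

Section Concrete.
Variables (B : pzRingType) (I : finType) (J : I -> B -> Prop).

Definition eqA_J (a a' : {ffun I -> B}) : Prop := forall i, J i (a i - a' i).

Definition eqC_J (c c' : {ffun I * I -> B}) : Prop :=
  forall i j, ideal_sum (J i) (J j) (c (i, j) - c' (i, j)).

Definition mulA_J (a a' : {ffun I -> B}) : {ffun I -> B} := [ffun i => a i * a' i].
Definition oneA_J : {ffun I -> B} := [ffun=> 1].

Definition lact_J (a : {ffun I -> B}) (c : {ffun I * I -> B}) : {ffun I * I -> B} :=
  [ffun jk => a jk.1 * c jk].
Definition ract_J (c : {ffun I * I -> B}) (a : {ffun I -> B}) : {ffun I * I -> B} :=
  [ffun jk => c jk * a jk.2].

Definition Delta_J (c : {ffun I * I -> B}) : seq ({ffun I * I -> B} * {ffun I * I -> B}) :=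
  [seq ([ffun il : I * I => c (il.1, k)],
        [ffun mj : I * I => if k == mj.2 then 1 else 0]) | k <- enum I].

Definition Delta'_J (c : {ffun I * I -> B}) : seq ({ffun I * I -> B} * {ffun I * I -> B}) :=
  [seq ([ffun il : I * I => if il.1 == k then 1 else 0],
        [ffun mj : I * I => c (k, mj.2)]) | k <- enum I].

Definition eps_J (c : {ffun I * I -> B}) : {ffun I -> B} := [ffun i => c (i, i)].

End Concrete.

From HB Require Import structures.
From mathcomp Require Import all_boot all_algebra.
Set Implicit Arguments. Unset Strict Implicit. Unset Printing Implicit Defensive.
Import GRing.Theory.
Local Open Scope ring_scope.

(* Everything is computed on representatives: all structure maps are
   entrywise ring operations, so well-definedness reduces to the ideal
   axioms of J_i + J_j.  The only real point is that Delta respects the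
   congruence: split an entry of J_i + J_j into its J_i part, which is
   already zero in the left tensor factor of Delta, and its J_j part, which
   is zero in the right tensor factor of the alternative formula Delta';
   and Delta = Delta' in C (x)_A C by moving the scalars b_ik across the
   tensor sign. *)

Section TwoSidedIdeal.
Variables (B : pzRingType) (J : B -> Prop).
Hypothesis idealJ : two_sided_ideal J.

Lemma ideal0 : J 0. Proof. by case: idealJ. Qed.

Lemma idealB x y : J x -> J y -> J (x - y).
Proof. by case: idealJ => _ idB _ _; apply: idB. Qed.

Lemma idealN x : J x -> J (- x).
Proof. by move=> Jx; rewrite -sub0r; apply: idealB ideal0 Jx. Qed.

Lemma idealD x y : J x -> J y -> J (x + y).
Proof. by move=> Jx Jy; rewrite -[y]opprK; apply: idealB (idealN Jy). Qed.

Lemma idealMl a x : J x -> J (a * x).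
Proof. by case: idealJ => _ _ idMl _; apply: idMl. Qed.

Lemma idealMr a x : J x -> J (x * a).
Proof. by case: idealJ => _ _ _ idMr; apply: idMr. Qed.

End TwoSidedIdeal.

Section IdealSum.
Variables (B : pzRingType) (J1 J2 : B -> Prop).
Hypotheses (idealJ1 : two_sided_ideal J1) (idealJ2 : two_sided_ideal J2).

Lemma ideal_sum_two_sided : two_sided_ideal (ideal_sum J1 J2).
Proof.
split.
- by exists 0, 0; rewrite addr0; split=> //; apply: ideal0.
- move=> _ _ [y [z [Jy Jz ->]]] [y' [z' [Jy' Jz' ->]]].
  by exists (y - y'), (z - z'); rewrite opprD addrACA; split=> //; apply: idealB.
- move=> a _ [y [z [Jy Jz ->]]].
  by exists (a * y), (a * z); rewrite mulrDr; split=> //; apply: idealMl.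
- move=> a _ [y [z [Jy Jz ->]]].
  by exists (y * a), (z * a); rewrite mulrDl; split=> //; apply: idealMr.
Qed.

Lemma ideal_suml x : J1 x -> ideal_sum J1 J2 x.
Proof. by exists x, 0; rewrite addr0; split=> //; apply: ideal0. Qed.

Lemma ideal_sumr x : J2 x -> ideal_sum J1 J2 x.
Proof. by exists 0, x; rewrite add0r; split=> //; apply: ideal0. Qed.

End IdealSum.

Lemma ideal_sum_id (B : pzRingType) (J : B -> Prop) x :
  two_sided_ideal J -> ideal_sum J J x -> J x.
Proof. by move=> idealJ [y [z [Jy Jz ->]]]; apply: idealD. Qed.

Section BalancedMaps.
Variables (TA TC : zmodType) (eqC : TC -> TC -> Prop).
Variables (la : TA -> TC -> TC) (ra : TC -> TA -> TC).

Section Balanced2.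
Variables (G : zmodType) (f : TC -> TC -> G).
Hypothesis balanced_f : balanced2 eqC la ra f.

Lemma balanced2Dl x x' y : f (x + x') y = f x y + f x' y.
Proof. by case: balanced_f. Qed.

Lemma balanced2Dr x y y' : f x (y + y') = f x y + f x y'.
Proof. by case: balanced_f. Qed.

Lemma balanced2_act x a y : f (ra x a) y = f x (la a y).
Proof. by case: balanced_f. Qed.

Lemma balanced2_0l y : f 0 y = 0.
Proof. by apply: (addrI (f 0 y)); rewrite -balanced2Dl !addr0. Qed.

Lemma balanced2_0r x : f x 0 = 0.
Proof. by apply: (addrI (f x 0)); rewrite -balanced2Dr !addr0. Qed.

Lemma balanced2_suml (X : Type) (r : seq X) (F : X -> TC) y :
  f (\sum_(k <- r) F k) y = \sum_(k <- r) f (F k) y.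
Proof.
exact: (big_morph (f^~ y) (fun x x' => balanced2Dl x x' y) (balanced2_0l y)).
Qed.

Lemma balanced2_sumr (X : Type) (r : seq X) (F : X -> TC) x :
  f x (\sum_(k <- r) F k) = \sum_(k <- r) f x (F k).
Proof. exact: (big_morph (f x) (balanced2Dr x) (balanced2_0r x)). Qed.

Hypothesis eqC_refl : forall x, eqC x x.

Lemma balanced2_congl x x' y : eqC x x' -> f x y = f x' y.
Proof. by case: balanced_f => fcong _ _ _ exx'; apply: fcong exx' (eqC_refl y). Qed.

Lemma balanced2_congr x y y' : eqC y y' -> f x y = f x y'.
Proof. by case: balanced_f => fcong _ _ _ eyy'; apply: fcong (eqC_refl x) eyy'. Qed.

End Balanced2.

Section Balanced3.
Variables (G : zmodType) (f : TC -> TC -> TC -> G).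
Hypothesis balanced_f : balanced3 eqC la ra f.

Lemma balanced3Dm x y y' z : f x (y + y') z = f x y z + f x y' z.
Proof. by case: balanced_f. Qed.

Lemma balanced3_0m x z : f x 0 z = 0.
Proof. by apply: (addrI (f x 0 z)); rewrite -balanced3Dm !addr0. Qed.

Lemma balanced3_summ (X : Type) (r : seq X) (F : X -> TC) x z :
  f x (\sum_(k <- r) F k) z = \sum_(k <- r) f x (F k) z.
Proof.
exact: (big_morph (f x ^~ z) (fun y y' => balanced3Dm x y y' z) (balanced3_0m x z)).
Qed.

End Balanced3.

End BalancedMaps.

Section CoringOfCovering.
Variables (B : pzRingType) (I : finType) (J : I -> B -> Prop).
Hypothesis idealJ : forall i, two_sided_ideal (J i).

Local Notation TC := {ffun I * I -> B}.
Local Notation eqA := (eqA_J J).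
Local Notation eqC := (eqC_J J).
Local Notation la := (@lact_J B I).
Local Notation ra := (@ract_J B I).

Lemma ideal_sum_J i j : two_sided_ideal (ideal_sum (J i) (J j)).
Proof. exact: ideal_sum_two_sided. Qed.

Lemma eqA_J_refl a : eqA a a.
Proof. by move=> i; rewrite subrr; apply: ideal0. Qed.

Lemma eqC_J_refl c : eqC c c.
Proof. by move=> i j; rewrite subrr; apply: ideal0 (ideal_sum_J i j). Qed.

Lemma eqC_J_congruence : zmod_congruence eqC.
Proof.
split.
- exact: eqC_J_refl.
- move=> c c' ecc' i j; rewrite -opprB.
  exact: (idealN (ideal_sum_J i j) (ecc' i j)).
- move=> c c' c'' ecc' ec'c'' i j.
  rewrite -(subrKA (c' (i, j))).
  exact: (idealD (ideal_sum_J i j) (ecc' i j) (ec'c'' i j)).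
- move=> c c' d d' ecc' edd' i j; rewrite !ffunE opprD addrACA.
  exact: (idealD (ideal_sum_J i j) (ecc' i j) (edd' i j)).
- move=> c c' ecc' i j; rewrite !ffunE -opprD.
  exact: (idealN (ideal_sum_J i j) (ecc' i j)).
Qed.

Lemma lact_J_eq a a' c c' : eqA a a' -> eqC c c' -> eqC (la a c) (la a' c').
Proof.
move=> eaa' ecc' i j; rewrite !ffunE /=.
have -> : a i * c (i, j) - a' i * c' (i, j)
        = (a i - a' i) * c (i, j) + a' i * (c (i, j) - c' (i, j)).
  by rewrite mulrBl mulrBr addrA subrK.
apply: (idealD (ideal_sum_J i j)).
- exact: (ideal_suml (idealJ j) (idealMr (idealJ i) _ (eaa' i))).
- exact: (idealMl (ideal_sum_J i j) _ (ecc' i j)).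
Qed.

Lemma ract_J_eq a a' c c' : eqA a a' -> eqC c c' -> eqC (ra c a) (ra c' a').
Proof.
move=> eaa' ecc' i j; rewrite !ffunE /=.
have -> : c (i, j) * a j - c' (i, j) * a' j
        = (c (i, j) - c' (i, j)) * a j + c' (i, j) * (a j - a' j).
  by rewrite mulrBl mulrBr addrA subrK.
apply: (idealD (ideal_sum_J i j)).
- exact: (idealMr (ideal_sum_J i j) _ (ecc' i j)).
- exact: (ideal_sumr (idealJ i) (idealMl (idealJ j) _ (eaa' j))).
Qed.

Lemma is_bimodule_J : is_bimodule eqA (@mulA_J B I) (@oneA_J B I) eqC la ra.
Proof.
have eqC_eq c c' : c = c' -> eqC c c' by move->; apply: eqC_J_refl.
split.
- by split; [exact: eqC_J_congruence | split; [exact: lact_J_eq | exact: ract_J_eq]].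
- by move=> c; split; apply/eqC_eq/ffunP => -[i j]; rewrite !ffunE ?mul1r ?mulr1.
- by move=> a a' c; split; [|split]; apply/eqC_eq/ffunP => -[i j];
    rewrite !ffunE /= mulrA.
- by move=> a c c'; split; apply/eqC_eq/ffunP => -[i j];
    rewrite !ffunE ?mulrDr ?mulrDl.
- by move=> a a' c; split; apply/eqC_eq/ffunP => -[i j];
    rewrite !ffunE ?mulrDr ?mulrDl.
Qed.

Local Notation col_J c k := [ffun il : I * I => c (il.1, k)].
Local Notation row_J c k := [ffun mj : I * I => c (k, mj.2)].
Local Notation unit_col k := [ffun mj : I * I => if k == mj.2 then (1 : B) else 0].
Local Notation unit_row k := [ffun il : I * I => if il.1 == k then (1 : B) else 0].
Local Notation cst b := [ffun _ : I => b].

Lemma big_Delta_J (G : zmodType) (F : TC * TC -> G) (c : TC) :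
  \sum_(p <- Delta_J c) F p = \sum_k F (col_J c k, unit_col k).
Proof. by rewrite big_map big_enum. Qed.

Lemma big_Delta'_J (G : zmodType) (F : TC * TC -> G) (c : TC) :
  \sum_(p <- Delta'_J c) F p = \sum_k F (unit_row k, row_J c k).
Proof. by rewrite big_map big_enum. Qed.

Lemma if10_mull (b : bool) (y : B) : (if b then 1 else 0) * y = if b then y else 0.
Proof. by case: b; rewrite ?mul1r ?mul0r. Qed.

Lemma if10_mulr (b : bool) (y : B) : y * (if b then 1 else 0) = if b then y else 0.
Proof. by case: b; rewrite ?mulr1 ?mulr0. Qed.

Lemma sum_delta (G : zmodType) (F : I -> G) k :
  \sum_i (if i == k then F i else 0) = F k.
Proof. by rewrite -big_mkcond big_pred1_eq. Qed.

Lemma col_J_sum_ract (c : TC) k :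
  col_J c k = \sum_i ra (unit_row i) (cst (c (i, k))).
Proof.
apply/ffunP => -[i l]; rewrite sum_ffunE ffunE /=.
under eq_bigr do rewrite !ffunE /= if10_mull eq_sym.
by rewrite sum_delta.
Qed.

Lemma row_J_sum_lact (c : TC) i :
  row_J c i = \sum_k la (cst (c (i, k))) (unit_col k).
Proof.
apply/ffunP => -[m j]; rewrite sum_ffunE ffunE /=.
under eq_bigr do rewrite !ffunE /= if10_mulr.
by rewrite sum_delta.
Qed.

Section BalancedDelta.
Variables (G : zmodType) (f : TC -> TC -> G).
Hypothesis balanced_f : balanced2 eqC la ra f.

Local Notation Delta_sum c := (\sum_k f (col_J c k) (unit_col k)).

Lemma balanced_Delta_J_Delta'_J (c : TC) :
  Delta_sum c = \sum_k f (unit_row k) (row_J c k).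
Proof.
under eq_bigr do rewrite col_J_sum_ract (balanced2_suml balanced_f).
under eq_bigr do under eq_bigr do rewrite (balanced2_act balanced_f).
rewrite exchange_big /=; apply: eq_bigr => i _.
by rewrite row_J_sum_lact (balanced2_sumr balanced_f).
Qed.

Lemma balanced_Delta_J_add (c c' : TC) :
  Delta_sum (c + c') = Delta_sum c + Delta_sum c'.
Proof.
rewrite -big_split /=; apply: eq_bigr => k _.
by rewrite -(balanced2Dl balanced_f); congr f; apply/ffunP => p; rewrite !ffunE.
Qed.

Lemma balanced_Delta_J_left0 (d : TC) :
  (forall i j, J i (d (i, j))) -> Delta_sum d = 0.
Proof.
move=> Jd; apply: big1 => k _.
rewrite (balanced2_congl balanced_f eqC_J_refl (x' := 0))
  ?(balanced2_0l balanced_f) // => i l.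
by rewrite !ffunE subr0; apply: ideal_suml.
Qed.

Lemma balanced_Delta_J_right0 (d : TC) :
  (forall i j, J j (d (i, j))) -> Delta_sum d = 0.
Proof.
move=> Jd; rewrite balanced_Delta_J_Delta'_J; apply: big1 => k _.
rewrite (balanced2_congr balanced_f eqC_J_refl _ (y' := 0))
  ?(balanced2_0r balanced_f) // => m j.
by rewrite !ffunE subr0; apply: ideal_sumr.
Qed.

Lemma balanced_Delta_J_eq (c c' : TC) : eqC c c' -> Delta_sum c = Delta_sum c'.
Proof.
move=> ecc'.
have /fin_all_exists2[y Jy Jz] (p : I * I) :
    exists2 y, J p.1 y & J p.2 (c p - c' p - y).
  case: p => i j; have [a [b [Ja Jb ->]]] := ecc' i j.
  by exists a; rewrite // addrC addKr.
set cy : TC := [ffun p => y p]; set cz : TC := [ffun p => c p - c' p - y p].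
have -> : c = cy + cz + c' by apply/ffunP => p; rewrite !ffunE [y p + _]addrC !subrK.
rewrite !balanced_Delta_J_add (@balanced_Delta_J_left0 cy)
  ?(@balanced_Delta_J_right0 cz) ?add0r //.
- by move=> i j; rewrite ffunE; apply: (Jz (i, j)).
- by move=> i j; rewrite ffunE; apply: (Jy (i, j)).
Qed.

End BalancedDelta.

Local Notation tensor2_eqC := (tensor2_eq eqC la ra).

Lemma Delta_J_Delta'_J (c : TC) : tensor2_eqC (Delta_J c) (Delta'_J c).
Proof.
by move=> G f balanced_f; rewrite big_Delta_J big_Delta'_J balanced_Delta_J_Delta'_J.
Qed.

Lemma Delta_J_eq (c c' : TC) : eqC c c' -> tensor2_eqC (Delta_J c) (Delta_J c').
Proof.
by move=> ecc' G f balanced_f; rewrite !big_Delta_J; apply: balanced_Delta_J_eq.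
Qed.

Lemma Delta_J_add (c c' : TC) :
  tensor2_eqC (Delta_J (c + c')) (Delta_J c ++ Delta_J c').
Proof.
by move=> G f balanced_f; rewrite big_cat !big_Delta_J balanced_Delta_J_add.
Qed.

Lemma Delta_J_bimodule a (c : TC) a' :
  tensor2_eqC (Delta_J (ra (la a c) a'))
              [seq (la a p.1, ra p.2 a') | p <- Delta_J c].
Proof.
move=> G f balanced_f; rewrite big_Delta_J big_map big_Delta_J.
apply: eq_bigr => k _ /=.
have -> : ra (unit_col k) a' = la (cst (a' k)) (unit_col k).
  by apply/ffunP => -[m j]; rewrite !ffunE /= if10_mull if10_mulr; case: eqP => [->|].
by rewrite -(balanced2_act balanced_f); congr f; apply/ffunP => -[i l]; rewrite !ffunE.
Qed.

Lemma eps_J_eq (c c' : TC) : eqC c c' -> eqA (eps_J c) (eps_J c').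
Proof. by move=> ecc' i; rewrite !ffunE; apply: ideal_sum_id (ecc' i i). Qed.

Lemma eps_J_add (c c' : TC) : eps_J (c + c') = eps_J c + eps_J c'.
Proof. by apply/ffunP => i; rewrite !ffunE. Qed.

Lemma eps_J_bimodule a (c : TC) a' :
  eps_J (ra (la a c) a') = mulA_J (mulA_J a (eps_J c)) a'.
Proof. by apply/ffunP => i; rewrite !ffunE. Qed.

Lemma sum_unit_col : \sum_k unit_col k = [ffun=> 1].
Proof.
apply/ffunP => -[m j]; rewrite sum_ffunE ffunE.
by under eq_bigr do rewrite ffunE; rewrite (sum_delta (fun=> 1)).
Qed.

Lemma Delta_J_coassoc (c : TC) :
  tensor3_eq eqC la ra
    [seq (q.1, q.2, p.2) | p <- Delta_J c, q <- Delta_J p.1]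
    [seq (p.1, q.1, q.2) | p <- Delta_J c, q <- Delta_J p.2].
Proof.
move=> G f balanced_f; rewrite !big_allpairs_dep !big_Delta_J.
apply: eq_bigr => j _; rewrite !big_Delta_J /=.
have col_col k : col_J (col_J c j) k = col_J c j by apply/ffunP => p; rewrite !ffunE.
have col_unit k : col_J (unit_col j) k = if k == j then [ffun=> 1] else 0.
  by apply/ffunP => p; rewrite !ffunE eq_sym; case: eqP; rewrite ?ffunE.
under eq_bigr do rewrite col_col.
under [RHS]eq_bigr do rewrite col_unit.
rewrite -(balanced3_summ balanced_f) sum_unit_col (bigD1 j) //= eqxx big1 ?addr0 //.
by move=> k /negbTE ->; apply: (balanced3_0m balanced_f).
Qed.

Lemma Delta_J_counit (c : TC) :
  eqC (\sum_(p <- Delta_J c) la (eps_J p.1) p.2) c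
  /\ eqC (\sum_(p <- Delta_J c) ra p.1 (eps_J p.2)) c.
Proof.
suff [-> ->] : \sum_(p <- Delta_J c) la (eps_J p.1) p.2 = c
            /\ \sum_(p <- Delta_J c) ra p.1 (eps_J p.2) = c.
  by split; apply: eqC_J_refl.
by split; apply/ffunP => -[m j]; rewrite big_Delta_J sum_ffunE;
  under eq_bigr do rewrite !ffunE /= if10_mulr; rewrite sum_delta.
Qed.

Lemma is_coring_J :
  is_coring eqA (@mulA_J B I) (@oneA_J B I) eqC la ra (@Delta_J B I) (@eps_J B I).
Proof.
split.
- exact: is_bimodule_J.
- by split; [exact: Delta_J_eq | exact: Delta_J_add | exact: Delta_J_bimodule].
- split; first exact: eps_J_eq.
  + by move=> c c'; rewrite eps_J_add; apply: eqA_J_refl.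
  + by move=> a c a'; rewrite eps_J_bimodule; apply: eqA_J_refl.
- exact: Delta_J_coassoc.
- exact: Delta_J_counit.
Qed.

End CoringOfCovering.

Theorem proposition3p3 (k : fieldType) (B : algType k) (I : finType)
    (J : I -> B -> Prop) :
  covering J ->
  is_coring (eqA_J J) (@mulA_J B I) (@oneA_J B I) (eqC_J J)
    (@lact_J B I) (@ract_J B I) (@Delta_J B I) (@eps_J B I)
  /\ (forall c : {ffun I * I -> B},
        tensor2_eq (eqC_J J) (@lact_J B I) (@ract_J B I)
          (Delta_J c) (Delta'_J c)).
Proof.
case=> idealJ _; split; first exact: is_coring_J.
exact: Delta_J_Delta'_J.
Qed.
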